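(* Let $\mathbb{K}$ be an infinite field, $n\in\mathbb{N}$, and $G\subseteq\mathrm{GL}_n(\mathbb{K})$ a subgroup endowed with a topology making it a topological group. If $G$ has an open subgroup which is soluble (resp. nilpotent), then $G$ has an open normal subgroup which is soluble (resp. nilpotent). *)

(* matrices over a field; GL_n(K) is infinite, so groups are
   represented as Prop-valued subsets of 'M[K]_n, not as finGroupTypes. *)
From HB Require Import structures.
From mathcomp Require Import all_boot all_order all_algebra.
Set Implicit Arguments. Unset Strict Implicit. Unset Printing Implicit Defensive.
Import GRing.Theory.
Local Open Scope ring_scope.

Section GLDefs.
Variables (K : fieldType) (n : nat).

Definition mset := 'M[K]_n -> Prop.

Definition msubset (A B : mset) : Prop := forall x, A x -> B x.

Definition is_subgroup (A : mset) : Prop :=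
  [/\ A 1%:M,
      (forall x, A x -> x \in unitmx),
      (forall x y, A x -> A y -> A (x *m y)) &
      (forall x, A x -> A (invmx x))].

Definition is_normal (N G : mset) : Prop :=
  forall g x, G g -> N x -> N (invmx g *m x *m g).

Definition mcomm (x y : 'M[K]_n) : 'M[K]_n := invmx x *m invmx y *m x *m y.

Definition gen_subgroup (S : mset) : mset :=
  fun x => forall H, is_subgroup H -> msubset S H -> H x.

Definition comm_subgroup (A B : mset) : mset :=
  gen_subgroup (fun z => exists a b, [/\ A a, B b & z = mcomm a b]).

Fixpoint derived (H : mset) (k : nat) : mset :=
  if k is k'.+1 then comm_subgroup (derived H k') (derived H k') else H.

Fixpoint lower_central (H : mset) (k : nat) : mset :=
  if k is k'.+1 then comm_subgroup (lower_central H k') H else H.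

Definition soluble (H : mset) : Prop :=
  exists k, forall x, derived H k x -> x = 1%:M.

Definition nilpotent (H : mset) : Prop :=
  exists k, forall x, lower_central H k x -> x = 1%:M.

Definition is_topology (G : mset) (op : mset -> Prop) : Prop :=
  [/\ (forall U, op U -> msubset U G),
      op G,
      (forall F : mset -> Prop, (forall U, F U -> op U) ->
          op (fun x => exists2 U, F U & U x)) &
      (forall U V, op U -> op V -> op (fun x => U x /\ V x))].

(* G is a subgroup of GL_n(K) and op a topology on G making it a topological
   group: multiplication G x G -> G (product topology) and inversion are
   continuous. *)
Definition is_topological_group (G : mset) (op : mset -> Prop) : Prop :=
  [/\ is_subgroup G,
      is_topology G op,
      (forall U x y, op U -> G x -> G y -> U (x *m y) ->
         exists V W, [/\ op V, op W, V x, W y &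
           forall v w, V v -> W w -> U (v *m w)]) &
      (forall U, op U -> op (fun x => G x /\ U (invmx x)))].

Definition open_subgroup (G : mset) (op : mset -> Prop) (H : mset) : Prop :=
  [/\ is_subgroup H, msubset H G & op H].

End GLDefs.

From HB Require Import structures.
From mathcomp Require Import all_boot all_order all_algebra.
From mathcomp Require Import zify.
From Stdlib Require Import Classical FunctionalExtensionality PropExtensionality.
Set Implicit Arguments. Unset Strict Implicit. Unset Printing Implicit Defensive.
Import GRing.Theory.
Local Open Scope ring_scope.

(* Replace the Zariski closure by a bounded-degree one: cl_d(A) is the set of
   x in GL_n(K) at which every polynomial of degree at most d in the
   entries of x and x^-1 vanishing on A vanishes. For a subgroup A it is a subgroup;
   since a commutator is of degree 2 in each argument, the k-th derived (resp.
   lower central) subgroup of cl_(2^k)(H) lies in cl_1 of the k-th derived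
   (resp. lower central) subgroup of H, and cl_1({1}) = {1}.
   The polynomials of degree at most d span a finite-dimensional space, so the
   conditions "g^-1 x g lies in cl_d(H)" for all g in G are implied by
   finitely many of them, hence by "g_i^-1 x g_i lies in H" for finitely many
   g_i. Thus N = {x in G | g^-1 x g in cl_d(H) for all g in G} is a normal
   subgroup of G containing an open neighbourhood of 1, hence open, and it
   inherits solubility (nilpotency) from cl_d(H) for d = 2^k. *)

Lemma finite_row_span (F : fieldType) m (S : 'rV[F]_m -> Prop) :
  exists k (A : 'M[F]_(k, m)), (forall i, S (row i A)) /\ forall v, S v -> (v <= A)%MS.
Proof.
suff grow j k (A : 'M[F]_(k, m)) :
    (forall i, S (row i A)) -> (m - \rank A <= j)%N ->
  exists k' (A' : 'M[F]_(k', m)), (forall i, S (row i A')) /\ forall v, S v -> (v <= A')%MS.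
  by apply: (grow m 0%N 0) => [[]|]; rewrite ?leq_subr.
elim: j k A => [|j IH] k A SA rkA.
  exists k, A; split=> // v _; apply: submx_full.
  by rewrite /row_full eqn_leq rank_leq_col /=; apply/leP; lia.
have [spanA|] := classic (forall v, S v -> (v <= A)%MS); first by exists k, A.
move=> /not_all_ex_not [v nv]; have [Sv vA] := imply_to_and _ _ nv.
have SvA i : S (row i (col_mx v A)).
  by rewrite -(splitK i); case: split => i'; rewrite ?rowKu ?row_id ?rowKd.
apply: (IH _ _ SvA).
have Asub : (A <= col_mx v A)%MS.
  by have := submx_refl (col_mx v A); rewrite col_mx_sub => /andP[].
have : (\rank A < \rank (col_mx v A))%N.
  apply: rank_ltmx; rewrite ltmxE Asub col_mx_sub /=.
  by apply/negP => /andP[].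
have := rank_leq_col (col_mx v A); lia.
Qed.

Lemma finite_vanishing_subfamily (F : fieldType) (I : finType) (T X : Type)
    (D : T -> Prop) (b : I -> T -> F) (P : X -> Prop) (phi : X -> T -> F) :
  (forall p, P p -> exists c : I -> F, forall x, D x -> phi p x = \sum_i c i * b i x) ->
  exists k (ps : 'I_k -> X), (forall r, P (ps r)) /\
    forall p, P p -> forall x, D x -> (forall r, phi (ps r) x = 0) -> phi p x = 0.
Proof.
move=> phi_span.
pose coef (v : 'rV[F]_#|I|) i := v 0 (enum_rank i).
pose S v := exists p, P p /\ forall x, D x -> phi p x = \sum_i coef v i * b i x.
have [k [A [SA spanA]]] := finite_row_span S.
have [ps Pps] := fin_all_exists SA.
exists k, ps; split=> [r|p Pp x Dx phi0]; first by have [] := Pps r.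
have [c phiE] := phi_span p Pp.
have Sc : S (\row_j c (enum_val j)).
  exists p; split=> // y Dy; rewrite phiE //.
  by apply: eq_bigr => i _; rewrite /coef mxE enum_rankK.
have /submxP [w cE] := spanA _ Sc.
have coefE i : c i = \sum_r w 0 r * coef (row r A) i.
  have := congr1 (fun v : 'rV_#|I| => v 0 (enum_rank i)) cE.
  by rewrite /= !mxE enum_rankK => ->; apply: eq_bigr => r _; rewrite /coef mxE.
rewrite phiE //; under eq_bigr => i _ do rewrite coefE mulr_suml.
rewrite exchange_big big1 // => r _; have [_ phirE] := Pps r.
by rewrite -(eq_bigr _ (fun i _ => mulrA _ _ _)) -mulr_sumr -phirE // phi0 mulr0.
Qed.

Section PolynomialFunctions.
Variables (K : fieldType) (n : nat).
Local Notation M := 'M[K]_n.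
Local Notation J := (option (bool * 'I_n * 'I_n)).

Lemma invmxM (a b : M) : a \in unitmx -> b \in unitmx ->
  invmx (a *m b) = invmx b *m invmx a.
Proof.
move=> ua ub; have uab : a *m b \in unitmx by rewrite unitmx_mul ua.
rewrite -[LHS]mulmx1.
have <- : (a *m b) *m (invmx b *m invmx a) = 1%:M.
  by rewrite mulmxA -(mulmxA a) mulmxV // mulmx1 mulmxV.
by rewrite mulmxA mulVmx // mul1mx.
Qed.

Definition mx_coord (x : M) (j : J) : K :=
  if j is Some (b, i, k) then (if b then invmx x i k else x i k) else 1.

(* [polyfun d f]: on GL_n(K), f is a polynomial of degree at most d in the
   entries of x and of x^-1. *)
Fixpoint polyfun (d : nat) (f : M -> K) : Prop :=
  if d is d'.+1 then
    exists g : J -> M -> K, (forall j, polyfun d' (g j)) /\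
      forall x, x \in unitmx -> f x = \sum_j g j x * mx_coord x j
  else exists c, forall x, x \in unitmx -> f x = c.

Lemma polyfun_ext d f f' :
  polyfun d f -> (forall x, x \in unitmx -> f x = f' x) -> polyfun d f'.
Proof.
case: d => [|d] /=; first by case=> c fE eqf; exists c => x ux; rewrite -eqf // fE.
by case=> g [pg fE] eqf; exists g; split=> // x ux; rewrite -eqf // fE.
Qed.

Lemma polyfun_const d c : polyfun d (fun _ => c).
Proof.
elim: d c => [|d IH] c /=; first by exists c.
exists (fun j _ => if j is None then c else 0); split=> [[?|]|x _] //.
by rewrite (bigD1 None) //= big1 ?addr0 ?mulr1 // => -[] // ? _; rewrite mul0r.
Qed.

Lemma polyfun_add d f g : polyfun d f -> polyfun d g -> polyfun d (fun x => f x + g x).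
Proof.
elim: d f g => [|d IH] f g /=.
  by case=> c1 fE [c2 gE]; exists (c1 + c2) => x ux; rewrite fE ?gE.
case=> f' [pf fE] [g' [pg gE]].
exists (fun j x => f' j x + g' j x); split=> [j|x ux]; first exact: IH.
by rewrite fE // gE // -big_split; apply: eq_bigr => j _; rewrite mulrDl.
Qed.

Lemma polyfun_scale d a f : polyfun d f -> polyfun d (fun x => a * f x).
Proof.
elim: d f => [|d IH] f /=; first by case=> c fE; exists (a * c) => x ux; rewrite fE.
case=> g [pg fE]; exists (fun j x => a * g j x); split=> [j|x ux]; first exact: IH.
by rewrite fE // mulr_sumr; apply: eq_bigr => j _; rewrite mulrA.
Qed.

Lemma polyfun_sum d (I : Type) (r : seq I) (F : I -> M -> K) :
  (forall i, polyfun d (F i)) -> polyfun d (fun x => \sum_(i <- r) F i x).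
Proof.
move=> pF; elim: r => [|i r IH].
  by apply: polyfun_ext (polyfun_const d 0) _ => x _; rewrite big_nil.
by apply: polyfun_ext (polyfun_add (pF i) IH) _ => x _; rewrite big_cons.
Qed.

Lemma polyfun_widen d e f : (d <= e)%N -> polyfun d f -> polyfun e f.
Proof.
elim: e => [|e IH]; first by rewrite leqn0 => /eqP ->.
rewrite leq_eqVlt => /orP [/eqP -> //| /IH {}IH /IH pf].
exists (fun j => if j is None then f else fun _ => 0); split=> [[?|]|x _] //=.
  exact: polyfun_const.
by rewrite (bigD1 None) //= big1 ?addr0 ?mulr1 // => -[] // ? _; rewrite mul0r.
Qed.

Lemma polyfun_mul d e f g :
  polyfun d f -> polyfun e g -> polyfun (d + e) (fun x => f x * g x).
Proof.
move=> pf; elim: e g => [|e IH] g /=.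
  case=> c gE; rewrite addn0; apply: polyfun_ext (polyfun_scale c pf) _ => x ux.
  by rewrite gE // mulrC.
case=> h [ph gE]; rewrite addnS.
exists (fun j x => f x * h j x); split=> [j|x ux]; first exact: IH.
by rewrite gE // mulr_sumr; apply: eq_bigr => j _; rewrite mulrA.
Qed.

Lemma polyfun_coord j : polyfun 1 (fun x => mx_coord x j).
Proof.
exists (fun i _ => if i == j then 1 else 0); split=> [i|x _] /=.
  by exists (if i == j then 1 else 0).
rewrite (bigD1 j) //= eqxx mul1r big1 ?addr0 // => i /negbTE ->.
by rewrite mul0r.
Qed.

Definition polymx d (F : M -> M) := forall i k, polyfun d (fun x => F x i k).

Lemma polymx_ext d F F' :
  polymx d F -> (forall x, x \in unitmx -> F x = F' x) -> polymx d F'.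
Proof. by move=> pF eqF i k; apply: polyfun_ext (pF i k) _ => x /eqF ->. Qed.

Lemma polymx_mul d e F G :
  polymx d F -> polymx e G -> polymx (d + e) (fun x => F x *m G x).
Proof.
move=> pF pG i k; apply: polyfun_ext _ (fun x _ => esym (mxE _ _ _ _)).
by apply: polyfun_sum => j; apply: polyfun_mul.
Qed.

Definition polymap e (F : M -> M) :=
  [/\ forall x, x \in unitmx -> F x \in unitmx, polymx e F
    & polymx e (fun x => invmx (F x))].

Lemma polymap_const c : c \in unitmx -> polymap 0 (fun _ => c).
Proof. by move=> uc; split=> // i k; apply: polyfun_const. Qed.

Lemma polymap_id : polymap 1 id.
Proof.
split=> // i k; first exact: (polyfun_coord (Some (false, i, k))).
exact: (polyfun_coord (Some (true, i, k))).
Qed.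

Lemma polymap_invmx e F : polymap e F -> polymap e (fun x => invmx (F x)).
Proof.
case=> uF pF pFV; split=> [x /uF|//|]; first by rewrite unitmx_inv.
by apply: polymx_ext pF _ => x _; rewrite invmxK.
Qed.

Lemma polymap_mul d e F G :
  polymap d F -> polymap e G -> polymap (d + e) (fun x => F x *m G x).
Proof.
case=> uF pF pFV [uG pG pGV]; split.
- by move=> x ux; rewrite unitmx_mul uF ?uG.
- exact: polymx_mul.
rewrite addnC; apply: polymx_ext (polymx_mul pGV pFV) _ => x ux.
by rewrite invmxM ?uF ?uG.
Qed.

Lemma polymap_coord e F j : polymap e F -> polyfun e (fun x => mx_coord (F x) j).
Proof.
case=> _ pF pFV; case: j => [[[[] i] k]|]; [exact: pFV | exact: pF |].
exact: polyfun_const.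
Qed.

Lemma polyfun_comp d e f F :
  polyfun d f -> polymap e F -> polyfun (d * e) (fun x => f (F x)).
Proof.
move=> pf pF; have [uF _ _] := pF; elim: d f pf => [|d IH] f /=.
  by case=> c fE; exists c => x ux; rewrite fE // uF.
case=> g [pg fE]; rewrite mulSn addnC.
apply: polyfun_ext (_ : polyfun _ (fun x => \sum_j g j (F x) * mx_coord (F x) j)) _.
  by apply: polyfun_sum => j; apply: polyfun_mul; [apply: IH | apply: polymap_coord].
by move=> x ux; rewrite fE // uF.
Qed.

Lemma polyfun_finite_span d : exists (I : finType) (b : I -> M -> K),
  forall f, polyfun d f ->
    exists c : I -> K, forall x, x \in unitmx -> f x = \sum_i c i * b i x.
Proof.
elim: d => [|d [I [b bspan]]].
  exists 'I_1, (fun _ _ => 1) => f [c fE]; exists (fun _ => c) => x ux.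
  by rewrite big_ord1 mulr1 fE.
exists (J * I)%type, (fun p x => b p.2 x * mx_coord x p.1) => f [g [pg fE]].
have [c gE] := fin_all_exists (fun j => bspan _ (pg j)).
exists (fun p => c p.1 p.2) => x ux.
rewrite fE // -(pair_bigA _ (fun j i => c j i * (b i x * mx_coord x j))) /=.
by apply: eq_bigr => j _; rewrite gE // mulr_suml; apply: eq_bigr => i _; rewrite mulrA.
Qed.

Definition zariski_cl d (A : mset K n) : mset K n := fun x =>
  x \in unitmx /\ forall f, polyfun d f -> (forall a, A a -> f a = 0) -> f x = 0.

Lemma sub_zariski_cl d (A : mset K n) :
  (forall a, A a -> a \in unitmx) -> msubset A (zariski_cl d A).
Proof. by move=> uA x Ax; split=> [|f _ fA]; [exact: uA | exact: fA]. Qed.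

Lemma zariski_cl_widen d e (A : mset K n) :
  (d <= e)%N -> msubset (zariski_cl e A) (zariski_cl d A).
Proof. by move=> de x [ux clx]; split=> // f pf; apply: clx (polyfun_widen de pf). Qed.

Lemma zariski_cl_map d e (A B : mset K n) F : polymap e F ->
  (forall a, A a -> zariski_cl d B (F a)) ->
  forall x, zariski_cl (d * e) A x -> zariski_cl d B (F x).
Proof.
move=> pF AB x [ux clx]; have [uF _ _] := pF; split; first exact: uF.
move=> f pf fB; apply: (clx (fun y => f (F y))); first exact: polyfun_comp.
by move=> a /AB [_ ->].
Qed.

Lemma zariski_cl_map1 d (A B : mset K n) F : polymap 1 F ->
  (forall a, A a -> zariski_cl d B (F a)) ->
  forall x, zariski_cl d A x -> zariski_cl d B (F x).
Proof. by move=> pF AB x; rewrite -{1}[d]muln1; apply: zariski_cl_map pF AB x. Qed.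

Lemma zariski_cl_subgroup d (A : mset K n) :
  is_subgroup A -> is_subgroup (zariski_cl d A).
Proof.
case=> A1 uA mulA invA; have subA := sub_zariski_cl d uA.
have clmull a : A a -> forall z, zariski_cl d A z -> zariski_cl d A (a *m z).
  move=> Aa; have pF : polymap 1 (fun z => a *m z).
    exact: polymap_mul (polymap_const (uA a Aa)) polymap_id.
  by apply: (zariski_cl_map1 pF) => a' Aa'; apply/subA/mulA.
split=> [|x []//| x y clx cly |x].
- exact: subA.
- have pF : polymap 1 (fun z => z *m y).
    exact: polymap_mul polymap_id (polymap_const cly.1).
  by apply: (zariski_cl_map1 pF) clx => a Aa; apply: clmull.
- have pF : polymap 1 (@invmx K n) by apply: polymap_invmx polymap_id.
  by apply: (zariski_cl_map1 pF) => a Aa; apply/subA/invA.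
Qed.

Lemma zariski_cl1_trivial (S : mset K n) : msubset S (fun x => x = 1%:M) ->
  msubset (zariski_cl 1 S) (fun x => x = 1%:M).
Proof.
move=> S1 x [ux clx]; apply/matrixP => i k; apply/eqP; rewrite -subr_eq0; apply/eqP.
apply: (clx (fun y => mx_coord y (Some (false, i, k)) - (1%:M : M) i k)).
  exact: polyfun_add (polyfun_coord _) (polyfun_const _ _).
by move=> a /S1 ->; rewrite subrr.
Qed.

Lemma gen_subgroup_is_subgroup (S : mset K n) :
  (forall x, S x -> x \in unitmx) -> is_subgroup (gen_subgroup S).
Proof.
move=> uS; split=> [H [] //|x|x y Hx Hy H sH SH|x Hx H sH SH].
- move=> Sx; apply: (Sx (fun y => y \in unitmx)) => [|y /uS //].
  split=> [|//|y z|y]; first exact: unitmx1.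
    by rewrite unitmx_mul => -> ->.
  by rewrite unitmx_inv.
- by case: (sH) => _ _ mulH _; apply: mulH; [apply: Hx | apply: Hy].
- by case: (sH) => _ _ _ invH; apply: invH; apply: Hx.
Qed.

Lemma gen_subgroup_min (S H : mset K n) :
  is_subgroup H -> msubset S H -> msubset (gen_subgroup S) H.
Proof. by move=> sH SH x; apply. Qed.

Lemma gen_subgroup_mono (S T : mset K n) :
  msubset S T -> msubset (gen_subgroup S) (gen_subgroup T).
Proof. by move=> ST x Sx H sH TH; apply: Sx => // y /ST /TH. Qed.

Lemma comm_subgroup_mono (A A' B B' : mset K n) : msubset A A' -> msubset B B' ->
  msubset (comm_subgroup A B) (comm_subgroup A' B').
Proof.
move=> AA' BB'; apply: gen_subgroup_mono => z [a [b [Aa Bb ->]]].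
by exists a, b; split; [apply: AA' | apply: BB' |].
Qed.

Lemma comm_subgroup_is_subgroup (A B : mset K n) :
  (forall a, A a -> a \in unitmx) -> (forall b, B b -> b \in unitmx) ->
  is_subgroup (comm_subgroup A B).
Proof.
move=> uA uB; apply: gen_subgroup_is_subgroup => z [a [b [/uA ua /uB ub ->]]].
by rewrite /mcomm !unitmx_mul !unitmx_inv ua ub.
Qed.

Lemma polymap_mcommr a : a \in unitmx -> polymap 2 (mcomm a).
Proof.
move=> ua; have uaV : invmx a \in unitmx by rewrite unitmx_inv.
exact: polymap_mul (polymap_mul (polymap_mul (polymap_const uaV)
  (polymap_invmx polymap_id)) (polymap_const ua)) polymap_id.
Qed.

Lemma polymap_mcomml b : b \in unitmx -> polymap 2 (fun x => mcomm x b).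
Proof.
move=> ub; have ubV : invmx b \in unitmx by rewrite unitmx_inv.
exact: polymap_mul (polymap_mul (polymap_mul (polymap_invmx polymap_id)
  (polymap_const ubV)) polymap_id) (polymap_const ub).
Qed.

Lemma comm_subgroup_zariski_cl d (A B : mset K n) : is_subgroup A -> is_subgroup B ->
  msubset (comm_subgroup (zariski_cl (d * 2) A) (zariski_cl (d * 2) B))
          (zariski_cl d (comm_subgroup A B)).
Proof.
move=> [_ uA _ _] [_ uB _ _]; have sAB := comm_subgroup_is_subgroup uA uB.
apply: gen_subgroup_min (zariski_cl_subgroup d sAB) _ => _ [a [b [cla clb ->]]].
apply: zariski_cl_map (polymap_mcomml clb.1) _ _ cla => a' Aa'.
apply: zariski_cl_map (polymap_mcommr (uA a' Aa')) _ _ clb => b' Bb'.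
have [_ uAB _ _] := sAB; apply: sub_zariski_cl uAB _ _.
by move=> H _; apply; exists a', b'.
Qed.

Lemma derived_is_subgroup (H : mset K n) k :
  is_subgroup H -> is_subgroup (derived H k).
Proof. by move=> sH; elim: k => [|k [_ u _ _]] //=; apply: comm_subgroup_is_subgroup. Qed.

Lemma lower_central_is_subgroup (H : mset K n) k :
  is_subgroup H -> is_subgroup (lower_central H k).
Proof.
move=> sH; have [_ uH _ _] := sH.
by elim: k => [|k [_ u _ _]] //=; apply: comm_subgroup_is_subgroup.
Qed.

Lemma derived_mono (A B : mset K n) k :
  msubset A B -> msubset (derived A k) (derived B k).
Proof. by move=> AB; elim: k => //= k IH; apply: comm_subgroup_mono. Qed.

Lemma lower_central_mono (A B : mset K n) k :
  msubset A B -> msubset (lower_central A k) (lower_central B k).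
Proof. by move=> AB; elim: k => //= k IH; apply: comm_subgroup_mono. Qed.

Lemma derived_zariski_cl (H : mset K n) k d : is_subgroup H ->
  msubset (derived (zariski_cl (d * 2 ^ k) H) k) (zariski_cl d (derived H k)).
Proof.
move=> sH; elim: k d => [|k IH] d /=; first by rewrite muln1.
rewrite expnS mulnA => x Dx; apply: comm_subgroup_zariski_cl.
- exact: derived_is_subgroup.
- exact: derived_is_subgroup.
exact: comm_subgroup_mono (IH (d * 2)%N) (IH (d * 2)%N) _ Dx.
Qed.

Lemma lower_central_zariski_cl (H : mset K n) k d : is_subgroup H ->
  msubset (lower_central (zariski_cl (d * 2 ^ k) H) k)
          (zariski_cl d (lower_central H k)).
Proof.
move=> sH; elim: k d => [|k IH] d /=; first by rewrite muln1.
rewrite expnS mulnA => x Lx.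
apply: comm_subgroup_zariski_cl (lower_central_is_subgroup k sH) sH _ _.
apply: comm_subgroup_mono (IH (d * 2)%N) _ _ Lx.
by apply: zariski_cl_widen; rewrite leq_pmulr // expn_gt0.
Qed.

Lemma derived_trivial_of_sub_zariski_cl (H N : mset K n) k : is_subgroup H ->
  msubset (derived H k) (fun x => x = 1%:M) -> msubset N (zariski_cl (2 ^ k) H) ->
  msubset (derived N k) (fun x => x = 1%:M).
Proof.
move=> sH Hk NH x /(derived_mono NH); rewrite -[(2 ^ k)%N]mul1n.
by move=> /(derived_zariski_cl sH); apply: zariski_cl1_trivial.
Qed.

Lemma lower_central_trivial_of_sub_zariski_cl (H N : mset K n) k : is_subgroup H ->
  msubset (lower_central H k) (fun x => x = 1%:M) -> msubset N (zariski_cl (2 ^ k) H) ->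
  msubset (lower_central N k) (fun x => x = 1%:M).
Proof.
move=> sH Hk NH x /(lower_central_mono NH); rewrite -[(2 ^ k)%N]mul1n.
by move=> /(lower_central_zariski_cl sH); apply: zariski_cl1_trivial.
Qed.

Definition mconj (g x : M) : M := invmx g *m x *m g.

Lemma mconj1 g : g \in unitmx -> mconj g 1%:M = 1%:M.
Proof. by move=> ug; rewrite /mconj mulmx1 mulVmx. Qed.

Lemma mconjM g x y : g \in unitmx -> mconj g (x *m y) = mconj g x *m mconj g y.
Proof. by move=> ug; rewrite /mconj !mulmxA mulmxK. Qed.

Lemma mconjV g x : g \in unitmx -> x \in unitmx ->
  invmx (mconj g x) = mconj g (invmx x).
Proof.
move=> ug ux; rewrite /mconj invmxM ?unitmx_mul ?unitmx_inv ?ug ?ux //.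
by rewrite invmxM ?unitmx_inv ?ug ?ux // invmxK mulmxA.
Qed.

Lemma mconj_id x : mconj 1%:M x = x.
Proof. by rewrite /mconj invmx1 mul1mx mulmx1. Qed.

Lemma mconj_comp g h x : g \in unitmx -> h \in unitmx ->
  mconj h (mconj g x) = mconj (g *m h) x.
Proof. by move=> ug uh; rewrite /mconj invmxM // !mulmxA. Qed.

Lemma polymap_mconj g : g \in unitmx -> polymap 1 (mconj g).
Proof.
move=> ug; have ugV : invmx g \in unitmx by rewrite unitmx_inv.
exact: polymap_mul (polymap_mul (polymap_const ugV) polymap_id) (polymap_const ug).
Qed.

End PolynomialFunctions.

Lemma open_ext (T : Type) (op : (T -> Prop) -> Prop) (A B : T -> Prop) :
  op A -> (forall x, A x <-> B x) -> op B.
Proof.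
move=> oA AB; suff -> : B = A by [].
by apply: functional_extensionality => x; apply: propositional_extensionality; split=> /AB.
Qed.

Section TopologicalGroup.
Variables (K : fieldType) (n : nat) (G : mset K n) (op : mset K n -> Prop).
Hypothesis HG : is_topological_group G op.

Lemma open_of_nbhd (A : mset K n) :
  (forall x, A x -> exists W, [/\ op W, W x & msubset W A]) -> op A.
Proof.
have [_ [_ _ opU _] _ _] := HG; move=> nbhdA.
apply: (open_ext (opU (fun W => op W /\ msubset W A) (fun W oW => oW.1))) => x.
split=> [[W [_ WA] /WA] //|/nbhdA [W [oW Wx WA]]].
by exists W.
Qed.

Lemma open_translatel U g : op U -> G g -> op (fun y => G y /\ U (g *m y)).
Proof.
have [_ [opsub _ _ _] cont _] := HG; move=> oU Gg.
apply: open_of_nbhd => z [Gz Ugz].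
have [V [W [_ oW Vg Wz VW]]] := cont U g z oU Gg Gz Ugz.
by exists W; split=> // w Ww; split; [exact: opsub W oW w Ww | exact: VW].
Qed.

Lemma open_translater U g : op U -> G g -> op (fun y => G y /\ U (y *m g)).
Proof.
have [_ [opsub _ _ _] cont _] := HG; move=> oU Gg.
apply: open_of_nbhd => z [Gz Uzg].
have [V [W [oV _ Vz Wg VW]]] := cont U z g oU Gz Gg Uzg.
by exists V; split=> // v Vv; split; [exact: opsub V oV v Vv | exact: VW].
Qed.

Lemma open_mconj U g : op U -> G g -> op (fun x => G x /\ U (mconj g x)).
Proof.
have [[_ _ mulG invG] _ _ _] := HG; move=> oU Gg.
apply: (open_ext (open_translatel (open_translater oU Gg) (invG _ Gg))) => x.
split=> [[Gx []] //|[Gx Ux]].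
by split=> //; split=> //; apply: mulG => //; apply: invG.
Qed.

Lemma open_bigI (I : finType) (U : I -> mset K n) :
  (forall i, op (U i)) -> op (fun x => G x /\ forall i, U i x).
Proof.
have [_ [_ opG _ opI] _ _] := HG; move=> oU.
suff opIs (s : seq I) : op (fun x => G x /\ forall i, i \in s -> U i x).
  apply: (open_ext (opIs (enum I))) => x.
  by split=> -[Gx Ux]; split=> // i; apply: Ux; rewrite mem_enum.
elim: s => [|i s IH]; first by apply: (open_ext opG) => x; split=> [Gx|[]//]; split.
apply: (open_ext (opI _ _ (oU i) IH)) => x; split.
  by case=> Ui [Gx Us]; split=> // j; rewrite inE => /orP[/eqP -> //|]; apply: Us.
case=> Gx Us; split; first by apply: Us; rewrite mem_head.
by split=> // j js; apply: Us; rewrite inE js orbT.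
Qed.

Lemma open_subgroup_of_open_nbhd1 (N U : mset K n) : is_subgroup N -> msubset N G ->
  op U -> U 1%:M -> msubset U N -> op N.
Proof.
have [[_ _ _ invG] _ _ _] := HG; move=> [_ uN mulN _] NG oU U1 UN.
apply: open_of_nbhd => y Ny; exists (fun z => G z /\ U (invmx y *m z)); split.
- exact: open_translatel oU (invG _ (NG _ Ny)).
- by split; [exact: NG | rewrite mulVmx //; exact: uN].
move=> z [_ /UN Nz]; have := mulN _ _ Ny Nz.
by rewrite mulmxA mulmxV ?mul1mx //; exact: uN.
Qed.

Definition zariski_core d (H : mset K n) : mset K n :=
  fun x => G x /\ forall g, G g -> zariski_cl d H (mconj g x).

Lemma zariski_core_subgroup d H : is_subgroup H -> is_subgroup (zariski_core d H).
Proof.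
have [[G1 uG mulG invG] _ _ _] := HG; move=> sH.
have [cl1 _ clmul clinv] := zariski_cl_subgroup d sH.
split=> [|x [/uG]//| x y [Gx clx] [Gy cly] | x [Gx clx]].
- by split=> // g Gg; rewrite mconj1 ?uG.
- split=> [|g Gg]; first exact: mulG.
  by rewrite mconjM ?uG //; apply: clmul; [apply: clx | apply: cly].
- split=> [|g Gg]; first exact: invG.
  by rewrite -mconjV ?uG //; apply/clinv/clx.
Qed.

Lemma zariski_core_normal d H : is_normal (zariski_core d H) G.
Proof.
have [[_ uG mulG invG] _ _ _] := HG; move=> g x Gg [Gx clx].
split=> [|h Gh]; first by apply: mulG (mulG _ _ (invG _ Gg) Gx) Gg.
by rewrite (mconj_comp x (uG _ Gg) (uG _ Gh)); apply/clx/mulG.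
Qed.

Lemma zariski_core_sub d H : msubset (zariski_core d H) (zariski_cl d H).
Proof. by have [[G1 _ _ _] _ _ _] := HG; move=> x [_ /(_ _ G1)]; rewrite mconj_id. Qed.

Lemma open_zariski_core d H : open_subgroup G op H -> op (zariski_core d H).
Proof.
have [[G1 uG _ _] _ _ _] := HG; move=> [sH _ oH].
have [I [b bspan]] := polyfun_finite_span K n d.
pose P (q : 'M[K]_n * ('M[K]_n -> K)) :=
  [/\ G q.1, polyfun d q.2 & forall h, H h -> q.2 h = 0].
pose phi (q : 'M[K]_n * ('M[K]_n -> K)) x := q.2 (mconj q.1 x).
have phi_span q : P q ->
    exists c : I -> K, forall x, x \in unitmx -> phi q x = \sum_i c i * b i x.
  case: q => g f [/= /uG ug pf _]; apply: bspan.
  by rewrite -[d]muln1; apply: polyfun_comp pf (polymap_mconj ug).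
have [k [qs [Pqs phi0]]] := finite_vanishing_subfamily phi_span.
pose U i x := G x /\ H (mconj (qs i).1 x).
apply: (open_subgroup_of_open_nbhd1 (zariski_core_subgroup d sH) _
         (open_bigI (U := U) _)) => [x []//| i | | x [Gx Ux]].
- by have [Gq _ _] := Pqs i; apply: open_mconj.
- by split=> // i; split=> //; have [Gq _ _] := Pqs i; rewrite mconj1 ?uG //; case: sH.
split=> // g Gg; split=> [|f pf fH]; first by rewrite !unitmx_mul unitmx_inv !uG.
apply: (phi0 (g, f) _ x (uG _ Gx)) => [|r]; first by split.
by have [_ _ qH] := Pqs r; apply/qH; have [] := Ux r.
Qed.

Lemma open_normal_zariski_core d H : open_subgroup G op H ->
  open_subgroup G op (zariski_core d H) /\ is_normal (zariski_core d H) G.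
Proof.
move=> oH; have [sH _ _] := oH; split; last exact: zariski_core_normal.
split; [exact: zariski_core_subgroup | by move=> x [] | exact: open_zariski_core].
Qed.

End TopologicalGroup.

Theorem lemma1p4 (K : fieldType) (Kinf : forall s : seq K, exists x, x \notin s)
  (n : nat) (G : mset K n) (op : mset K n -> Prop)
  (HG : is_topological_group G op) :
  ((exists H, open_subgroup G op H /\ soluble H) ->
     exists N, [/\ open_subgroup G op N, is_normal N G & soluble N]) /\
  ((exists H, open_subgroup G op H /\ nilpotent H) ->
     exists N, [/\ open_subgroup G op N, is_normal N G & nilpotent N]).
Proof.
split=> -[H [oH [k Hk]]]; have [sH _ _] := oH;
  have [oN nN] := open_normal_zariski_core HG (2 ^ k)%N oH;
  exists (zariski_core G (2 ^ k)%N H); split=> //; exists k => x.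
- by apply: (derived_trivial_of_sub_zariski_cl sH Hk) => y /(zariski_core_sub HG).
- by apply: (lower_central_trivial_of_sub_zariski_cl sH Hk) => y /(zariski_core_sub HG).
Qed.
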